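(* Let $S,T\subseteq\mathbb{Z}_{>0}$ be finite. Then $|T\triangleleft S|=|S|$ if and only if $T\preceq S$.
   Context: For a finite set $S\subseteq\mathbb{Z}_{>0}$, $S(i)$ denotes its $i$th smallest element. $T\preceq S$ means $|T|\ge|S|$ and $T(i)<S(i)$ for all $i\in[|S|]$. For finite $S,T$, $T\triangleleft S$ is computed by going through $S$ from largest to smallest; each $s$ picks the largest element of $T$ less than $s$ not yet picked (if one exists); $T\triangleleft S$ is the set of picked elements. *)

From mathcomp Require Import all_boot.
From mathcomp Require Import finmap.
Set Implicit Arguments. Unset Strict Implicit. Unset Printing Implicit Defensive.
Local Open Scope fset_scope.

(* S(i) (1-indexed i-th smallest element) is ith_smallest S (i-1), 0-indexed. *)
Definition ith_smallest (S : {fset nat}) (i : nat) : nat :=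
  nth 0 (sort leq S) i.

Definition preceq (T S : {fset nat}) : Prop :=
  (#|` S| <= #|` T|)%N /\
  forall i : nat, (i < #|` S|)%N -> (ith_smallest T i < ith_smallest S i)%N.

Definition pick_step (T : {fset nat}) (P : {fset nat}) (s : nat) : {fset nat} :=
  let C := [fset t in T | (t < s)%N && (t \notin P)] in
  if C == fset0 then P else P `|` [fset (\max_(t <- C) t)%N].

Definition triangleleft (T S : {fset nat}) : {fset nat} :=
  foldl (pick_step T) fset0 (sort geq S).

From mathcomp Require Import all_boot.
From mathcomp Require Import finmap.
Local Open Scope fset_scope.

(* The procedure is a greedy matching of S into T in which s may only be
   matched to some t < s.  Hall's condition for such a matching is that for
   every s in S there are at least as many elements of T below s as elements
   of S up to s.  When S is processed from its largest element m downwards,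
   m picks the largest t < m, and Hall's condition for S and T is equivalent
   to Hall's condition for S minus m and T minus t: so the procedure picks
   |S| elements iff Hall's condition holds.  For s = S(i) the condition says
   i + 1 <= #{t in T | t < S(i)}, that is T(i) < S(i). *)

Lemma mem_bigmax_seq {s : seq nat} {x : nat} :
  x \in s -> (\max_(t <- s) t)%N \in s.
Proof.
elim: s x => [|a [|b s] IH] x // _;
  rewrite big_cons ?big_nil ?maxn0 ?mem_head //.
have maxs := IH b (mem_head b s).
by rewrite inE; case: leqP; rewrite ?eqxx ?maxs ?orbT.
Qed.

Lemma count_fsetD1 (p : pred nat) {T : {fset nat}} {a : nat} :
  a \in T -> count p T = (p a + count p (T `\ a))%N.
Proof.
move=> aT; rewrite -!sum1_count [LHS]big_mkcond (big_fsetD1 a) //= -big_mkcond.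
by case: (p a).
Qed.

Variant pick_step_spec (T P : {fset nat}) (s : nat) : {fset nat} -> Prop :=
  | PickNone of (forall t, t \in T -> (t < s)%N -> t \in P) :
      pick_step_spec T P s P
  | PickMax t of t \in T & (t < s)%N & t \notin P
      & (forall u, u \in T -> (u < s)%N -> u \notin P -> (u <= t)%N) :
      pick_step_spec T P s (P `|` [fset t]).

Lemma pick_stepP T P s : pick_step_spec T P s (pick_step T P s).
Proof.
rewrite /pick_step; set C := [fset t in T | _].
have memC u : (u \in C) = [&& u \in T, (u < s)%N & u \notin P] by rewrite !inE.
case: ifPn => [/eqP C0 | /fset0Pn [x xC]].
  apply: PickNone => t tT ts; apply: contraT => tP.
  by have := in_fset0 t; rewrite -C0 memC tT ts tP.
have := mem_bigmax_seq xC; rewrite memC => /and3P [maxT maxs maxP].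
apply: PickMax => // u uT us uP.
by apply: (leq_bigmax_seq u) => //; rewrite memC uT us uP.
Qed.

Lemma foldl_pick_stepU T P Q l :
  foldl (pick_step T) (P `|` Q) l = P `|` foldl (pick_step (T `\` P)) Q l.
Proof.
elim: l Q => [|a l IH] Q //=; rewrite -IH /pick_step.
have -> : [fset t in T | (t < a)%N && (t \notin P `|` Q)] =
          [fset t in T `\` P | (t < a)%N && (t \notin Q)].
  by apply/fsetP => t; rewrite !inE; case: (t \in P); rewrite ?andbF.
by case: ifP => _ //; rewrite fsetUA.
Qed.

Lemma foldl_pick_step_sub T Q l : foldl (pick_step T) Q l `<=` Q `|` T.
Proof.
elim: l Q => [|a l IH] Q /=; first exact: fsubsetUl.
apply: fsubset_trans (IH _) _; rewrite fsubUset fsubsetUr andbT.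
case: pick_stepP => [_|t tT _ _ _]; first exact: fsubsetUl.
by rewrite fsubUset fsubsetUl fsub1set inE tT orbT.
Qed.

Lemma card_foldl_pick_step T Q l :
  (#|` foldl (pick_step T) Q l| <= #|` Q| + size l)%N.
Proof.
elim: l Q => [|a l IH] Q /=; first by rewrite addn0.
apply: leq_trans (IH _) _; rewrite addnS -addSn leq_add2r.
case: pick_stepP => // t _ _ tQ _.
by rewrite fsetUC cardfsU1 tQ.
Qed.

Definition hall (T : {fset nat}) (l : seq nat) :=
  forall s, s \in l ->
  (count (fun x => x <= s) l <= count (fun t => t < s) T)%N.

Lemma hall_has_lt T l s : hall T l -> s \in l -> has (fun t => t < s)%N T.
Proof.
move=> hallTl sl; rewrite has_count; apply: leq_trans (hallTl s sl).
by rewrite -has_count; apply/hasP; exists s.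
Qed.

Lemma count_leq_head {m l} :
  path gtn m l -> count (fun x => x <= m)%N (m :: l) = (size l).+1.
Proof.
rewrite (path_sortedE (rev_trans ltn_trans)) /= leqnn => /andP [/allP lt_m _].
by rewrite -(count_predT l); congr S; apply: eq_in_count => x /lt_m /ltnW.
Qed.

Lemma hall_size_le T m l :
  path gtn m l -> hall T l -> (size l <= count (fun t => t < m) T)%N.
Proof.
case: l => [|m' l] //= /andP [m'_m m'l] hallTl.
rewrite -(count_leq_head m'l); apply: leq_trans (hallTl m' (mem_head _ _)) _.
by apply: sub_count => u /= /ltn_trans; apply.
Qed.

Lemma hall_cons_fsetD1 {T : {fset nat}} {m t l} :
  path gtn m l -> t \in T -> (t < m)%N ->
  (forall u, u \in T -> (u < m)%N -> (u <= t)%N) ->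
  hall T (m :: l) <-> hall (T `\ t) l.
Proof.
move=> ml tT tm t_max.
have lt_m : {in l, forall s, s < m}%N.
  by move: ml; rewrite (path_sortedE (rev_trans ltn_trans)) => /andP [/allP].
have count_cons s : s \in l ->
    count (fun x => x <= s)%N (m :: l) = count (fun x => x <= s)%N l.
  by move=> sl /=; rewrite leqNgt lt_m.
have count_D1 s := count_fsetD1 (fun u => u < s)%N tT.
split => [hallT s sl | hallTt s].
  have := hallT s; rewrite inE sl orbT count_cons // count_D1 => /(_ isT).
  case: (ltnP t s) => //= t_s.
  have same_below : count (fun u => u < s)%N T = count (fun u => u < m)%N T.
    apply: eq_in_count => u uT /=; apply/idP/idP => [us | um].
      exact: ltn_trans us (lt_m s sl).
    exact: leq_ltn_trans (t_max u uT um) t_s.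
  move: (hallT m (mem_head m l)).
  rewrite count_leq_head // -same_below count_D1 t_s.
  by rewrite add1n ltnS => /(leq_trans (count_size _ l)).
rewrite inE => /predU1P [-> | sl].
  by rewrite count_leq_head // count_D1 tm ltnS hall_size_le.
rewrite count_cons // count_D1.
exact: leq_trans (hallTt s sl) (leq_addl _ _).
Qed.

Lemma card_foldl_pick_stepE T l : sorted gtn l ->
  #|` foldl (pick_step T) fset0 l| = size l <-> hall T l.
Proof.
elim: l T => [|m l IH] T ml; first by split => // _ s.
have sl : sorted gtn l := path_sorted ml.
rewrite /=; case: (pick_stepP T fset0 m) => [none | t tT tm _ t_max].
  split => [card_l | /hall_has_lt /(_ (mem_head m l)) /hasP [u uT um]].
    by have := card_foldl_pick_step T fset0 l; rewrite card_l cardfs0 ltnn.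
  by have := none u uT um; rewrite inE.
rewrite fset0U -[[fset t]]fsetU0 foldl_pick_stepU cardfsU1.
have t_new : t \notin foldl (pick_step (T `\ t)) fset0 l.
  apply/negP => /(fsubsetP (foldl_pick_step_sub _ _ _)).
  by rewrite !inE eqxx.
have below_t u : u \in T -> (u < m)%N -> (u <= t)%N.
  by move=> uT um; apply: t_max; rewrite ?inE.
rewrite t_new add1n (hall_cons_fsetD1 ml tT tm below_t) -IH //.
by split => [/succn_inj | ->].
Qed.

Lemma count_leq_nth_sorted (u : seq nat) i : sorted ltn u -> (i < size u)%N ->
  count (fun x => x <= nth 0 u i)%N u = i.+1.
Proof.
elim: u i => [|a u IH] [|i] //=;
  rewrite (path_sortedE ltn_trans) => /andP [/allP a_lt su] iu.
  rewrite leqnn add1n -(count_pred0 u); congr S.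
  by apply: eq_in_count => x /a_lt a_x /=; rewrite leqNgt a_x.
by rewrite (ltnW (a_lt _ (mem_nth 0 iu))) IH.
Qed.

Lemma nth_lt_count_sorted (u : seq nat) j x : sorted leq u -> (j < size u)%N ->
  (nth 0 u j < x)%N = (j < count (fun t => t < x) u)%N.
Proof.
elim: u j => [|a u IH] j //=;
  rewrite (path_sortedE leq_trans) => /andP [/allP a_le su] ju.
case: (ltnP a x) => [a_x | x_a].
  by case: j ju => [|j] ju //=; rewrite IH.
have none : count (fun t => t < x)%N u = 0.
  apply/eqP; rewrite -leqn0 leqNgt -has_count; apply/hasPn => y /a_le.
  by rewrite -leqNgt; apply: leq_trans.
rewrite none; apply/negbTE; rewrite -leqNgt; apply: leq_trans x_a _.
by case: j ju => [|j] ju //=; apply: a_le; rewrite mem_nth.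
Qed.

Lemma sorted_ltn_sort_fset (S : {fset nat}) : sorted ltn (sort leq S).
Proof.
by rewrite ltn_sorted_uniq_leq sort_uniq fset_uniq (sort_sorted leq_total).
Qed.

Lemma hall_sortE (S T : {fset nat}) : hall T (sort geq S) <->
  forall i, (i < #|` S|)%N -> (i < count (fun t => t < ith_smallest S i) T)%N.
Proof.
rewrite /hall /ith_smallest; set sL := sort leq S.
have size_sL : #|` S| = size sL by rewrite size_sort.
have memE s : (s \in sort geq S) = (s \in sL) by rewrite !mem_sort.
have countE p : count p (sort geq S) = count p sL by rewrite !count_sort.
have sorted_sL := sorted_ltn_sort_fset S.
split => [hallT i | hall_nth s].
  rewrite size_sL => iS.
  have := hallT (nth 0 sL i).
  by rewrite memE countE mem_nth // count_leq_nth_sorted //; apply.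
rewrite memE countE => /(nthP 0) [i iS <-].
by rewrite count_leq_nth_sorted //; apply: hall_nth; rewrite size_sL.
Qed.

Lemma preceqE (S T : {fset nat}) : preceq T S <->
  forall i, (i < #|` S|)%N -> (i < count (fun t => t < ith_smallest S i) T)%N.
Proof.
rewrite /preceq /ith_smallest; set tL := sort leq T.
have size_tL : #|` T| = size tL by rewrite size_sort.
have countE x : count (fun t => t < x)%N T = count (fun t => t < x)%N tL.
  by rewrite count_sort.
have sorted_tL : sorted leq tL := sort_sorted leq_total T.
split => [[ST lt_nth] i iS | lt_count].
  by rewrite countE -nth_lt_count_sorted ?lt_nth // -size_tL (leq_trans iS ST).
have ST : (#|` S| <= #|` T|)%N.
  case: #|` S| lt_count => [|n] // /(_ n (ltnSn n)) /leq_trans; apply.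
  by rewrite size_tL countE count_size.
split => // i iS.
by rewrite nth_lt_count_sorted -?countE ?lt_count // -size_tL (leq_trans iS ST).
Qed.

Theorem lemma4p7 (S T : {fset nat})
  (HS : forall s, s \in S -> (0 < s)%N)
  (HT : forall t, t \in T -> (0 < t)%N) :
  #|` triangleleft T S| = #|` S| <-> preceq T S.
Proof.
rewrite /triangleleft -[#|` S|](size_sort geq) card_foldl_pick_stepE.
  by rewrite hall_sortE preceqE.
rewrite gtn_sorted_uniq_geq sort_uniq fset_uniq sort_sorted // => a b.
exact: leq_total.
Qed.
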